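(* Let $\mathbf{PG}$ be a consistent PCFG with start symbol $s$, no $\varepsilon$-rule, no useless nonterminal, and in which every rule has positive selection probability. Let $\ell$ be a prefix, let $\mathrm{Expl}(G_\ell)$ be its explanation graph and $\mathrm{Eq}(G_\ell)$ its system of probability equations (defined in the context). Let $S=\{A_1,\dots,A_K\}$ be an SCC of defined goals of $\mathrm{Expl}(G_\ell)$, and write the probability equations of the goals in $S$ as $\mathbf{X}_A=M\mathbf{X}_A+\mathbf{Y}_A$ with $\mathbf{X}_A=(P(A_1),\dots,P(A_K))^T$, as described in the context. Then this system has a unique solution, namely $\mathbf{X}_A=(I-M)^{-1}\mathbf{Y}_A$ (in particular $I-M$ is invertible).
   Context: Grammar: the underlying CFG has finite terminal set $\Sigma$, finite nonterminal set $N$, start symbol $s\in N$; every rule $A\to\alpha$ has $\alpha\in(N\cup\Sigma)^+$; no nonterminal is useless (each has a rule occurring in some derivation of a terminal string from $s$). $\mathbf{PG}$ assigns to each rule $A\to\alpha$ a selection probability $\theta_{A\to\alpha}>0$ with $\sum_\alpha\theta_{A\to\alpha}=1$ for each $A$; the probability of a derivation is the product of the probabilities of the rules used; $\mathbf{PG}$ is consistent if the total probability of terminal strings derived from $s$ is $1$. A prefix is a nonempty string $\ell\in\Sigma^+$ that is an initial segment of some terminal string derivable from $s$. Explanation graph. For a prefix $\ell$ consider ground atoms $q(\ell)$, $p(\beta,u,v)$ with $\beta\in(N\cup\Sigma)^*$, $u,v\in\Sigma^*$, and switch atoms $m(A\to\alpha)$. Consider all ground clauses: (C0) $q(\ell)\leftarrow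 p(s,\ell,\varepsilon)$; (C1) $p(\varepsilon,u,u)\leftarrow$ (empty body), for all $u$; (C2) for $a\in\Sigma$: $p(a\beta,a,\varepsilon)\leftarrow$ (empty body); and $p(a\beta,av,w)\leftarrow p(\beta,v,w)$ whenever $v\neq\varepsilon$; (C3) for $A\in N$ and each rule $A\to\alpha$: $p(A\beta,u,\varepsilon)\leftarrow m(A\to\alpha)\wedge p(\alpha,u,\varepsilon)$; and $p(A\beta,u,w)\leftarrow m(A\to\alpha)\wedge p(\alpha,u,v)\wedge p(\beta,v,w)$ whenever $v\neq\varepsilon$. A $p$- or $q$-atom is provable if it lies in the least Herbrand model of these clauses with all $m$-atoms true. The defined goals of $\mathrm{Expl}(G_\ell)$ form the smallest set containing $q(\ell)$ such that whenever $H$ is a defined goal and $H\leftarrow\alpha$ is one of the clauses above whose $p$-atoms are all provable, every $p$-atom of $\alpha$ is a defined goal. The defining formula of $H$ is $H\Leftrightarrow\alpha_1\vee\dots\vee\alpha_M$, the $\alpha_i$ being the bodies of all such clauses with head $H$ whose $p$-atoms are all provable. $H$ is a parent of $C$ if $C$ occurs in some $\alpha_i$; ancestor is the transitive closure; SCCs are the classes of the equivalence ''$A=B$ or each is an ancestor of the other''. Probability equations $\mathrm{Eq}(G_\ell)$: one real unknown $P(H)$ per defined goal $H$, with equation $P(H)=\sum_{i=1}^M\big(\prod_{C\text{ defined goal in }\alpha_i}P(C)\big)\big(\prod_{m(A\to\alpha)\text{ in }\alpha_i}\theta_{A\to\alpha}\big)$ (empty products equal $1$). This system has a least non-negative solution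 $\mathbf{X}_\infty$. Each disjunct $\alpha_i$ of a defining formula contains at most one defined goal from any given SCC, and all other defined goals in the defining formulas of goals in $S$ lie in SCCs not equal to $S$. Writing $\mathbf{X}_A=(P(A_1),\dots,P(A_K))^T$, the equations for $A_1,\dots,A_K$ take the form $\mathbf{X}_A=M\mathbf{X}_A+\mathbf{Y}_A$, where $M_{jk}$ is the sum, over disjuncts of the defining formula of $A_j$ that contain $A_k$, of the product of the $\theta$'s and of the $P(C)$ for the other defined goals $C$ in that disjunct, and $(\mathbf{Y}_A)_j$ is the sum, over disjuncts of the defining formula of $A_j$ containing no goal of $S$, of the corresponding products; here every $P(C)$ with $C\notin S$ is treated as a constant equal to its value in $\mathbf{X}_\infty$. $I$ is the $K\times K$ identity matrix. *)

From HB Require Import structures.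
From mathcomp Require Import all_boot all_order all_algebra.
From mathcomp Require Import boolp classical_sets functions cardinality fsbigop.
From mathcomp Require Import reals constructive_ereal ereal esum.
From Stdlib Require Import Relations.Relation_Operators.

Set Implicit Arguments.
Unset Strict Implicit.
Unset Printing Implicit Defensive.

Import Order.TTheory GRing.Theory Num.Theory.
Local Open Scope ring_scope.
Local Open Scope classical_set_scope.

Definition sym (T N : finType) := (T + N)%type.
Definition rule (T N : finType) := (N * seq (sym T N))%type.

(* We use the generic tree type GenTree.tree T:
   a leaf [Leaf a] is an occurrence of the terminal a, and a node
   [Node i ts] is an application of the i-th rule of [rules] (0-based) whose
   children [ts] are the subtrees for the symbols of the right-hand side.    *)
Definition ptree (T : finType) := GenTree.tree T.

Fixpoint valid_tree (T N : finType) (rules : seq (rule T N))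
    (X : sym T N) (t : ptree T) {struct t} : bool :=
  match t with
  | GenTree.Leaf a => X == inl a
  | GenTree.Node i ts =>
      match X with
      | inl _ => false
      | inr A =>
          match onth rules i with
          | None => false
          | Some r =>
              (r.1 == A) &&
              (fix chk (al : seq (sym T N)) (us : seq (ptree T)) {struct us} :=
                 match al, us with
                 | [::], [::] => true
                 | x :: al', u :: us' => valid_tree rules x u && chk al' us'
                 | _, _ => false
                 end) r.2 ts
          end
      end
  end.

Fixpoint tree_prob (R : realType) (T N : finType) (rules : seq (rule T N))
    (theta : rule T N -> R) (t : ptree T) {struct t} : R :=
  match t with
  | GenTree.Leaf _ => 1
  | GenTree.Node i ts =>
      match onth rules i with
      | None => 0
      | Some r => theta r
      end *
      (fix pr (us : seq (ptree T)) {struct us} : R :=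
         match us with
         | [::] => 1
         | u :: us' => tree_prob rules theta u * pr us'
         end) ts
  end.

Fixpoint tree_yield (T : finType) (t : ptree T) {struct t} : seq T :=
  match t with
  | GenTree.Leaf a => [:: a]
  | GenTree.Node _ ts =>
      (fix yl (us : seq (ptree T)) {struct us} : seq T :=
         match us with
         | [::] => [::]
         | u :: us' => tree_yield u ++ yl us'
         end) ts
  end.

Fixpoint uses_rule_of (T N : finType) (rules : seq (rule T N)) (A : N)
    (t : ptree T) {struct t} : bool :=
  match t with
  | GenTree.Leaf _ => false
  | GenTree.Node i ts =>
      match onth rules i with
      | None => false
      | Some r => r.1 == A
      end ||
      (fix an (us : seq (ptree T)) {struct us} : bool :=
         match us with
         | [::] => false
         | u :: us' => uses_rule_of rules A u || an us'
         end) ts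
  end.

Definition no_eps_rule (T N : finType) (rules : seq (rule T N)) : Prop :=
  forall r, r \in rules -> r.2 != [::].

Definition is_PCFG (R : realType) (T N : finType) (rules : seq (rule T N))
    (theta : rule T N -> R) : Prop :=
  uniq rules /\
  (forall r, r \in rules -> 0 < theta r) /\
  (forall A : N, \sum_(r <- rules | r.1 == A) theta r = 1).

Definition no_useless (T N : finType) (rules : seq (rule T N)) (s : N) : Prop :=
  forall A : N, exists t, valid_tree rules (inr s) t /\ uses_rule_of rules A t.

Definition consistent (R : realType) (T N : finType) (rules : seq (rule T N))
    (theta : rule T N -> R) (s : N) : Prop :=
  (\esum_(t in [set t : ptree T | valid_tree rules (inr s) t])
      (tree_prob rules theta t)%:E = 1)%E.

Definition is_prefix (T N : finType) (rules : seq (rule T N)) (s : N)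
    (l : seq T) : Prop :=
  l != [::] /\ exists t, valid_tree rules (inr s) t /\ prefix l (tree_yield t).

(* Ground atoms: q(l) is [inl l], p(beta,u,v) is [inr (beta,u,v)].           *)
Definition atom (T N : finType) := (seq T + (seq (sym T N) * seq T * seq T))%type.

Definition patom (T N : finType) (b : seq (sym T N)) (u v : seq T) : atom T N :=
  inr (b, u, v).

(* [clause rules s l H ms ps]: there is a ground clause with head H whose body
   consists of the switch atoms m(r) for r in ms and the atoms ps.          *)
Inductive clause (T N : finType) (rules : seq (rule T N)) (s : N) (l : seq T)
  : atom T N -> seq (rule T N) -> seq (atom T N) -> Prop :=
| C0 : clause rules s l (inl l) [::] [:: patom [:: inr s] l [::]]
| C1 u : clause rules s l (patom [::] u u) [::] [::]
| C2a a b : clause rules s l (patom (inl a :: b) [:: a] [::]) [::] [::]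
| C2b a b v w : v != [::] ->
    clause rules s l (patom (inl a :: b) (a :: v) w) [::] [:: patom b v w]
| C3a A b alpha u : (A, alpha) \in rules ->
    clause rules s l (patom (inr A :: b) u [::]) [:: (A, alpha)]
      [:: patom alpha u [::]]
| C3b A b alpha u v w : (A, alpha) \in rules -> v != [::] ->
    clause rules s l (patom (inr A :: b) u w) [:: (A, alpha)]
      [:: patom alpha u v; patom b v w].

(* least Herbrand model with all switch atoms true *)
Inductive provable (T N : finType) (rules : seq (rule T N)) (s : N) (l : seq T)
  : atom T N -> Prop :=
| prov H ms ps : clause rules s l H ms ps ->
    (forall C, C \in ps -> provable rules s l C) -> provable rules s l H.

(* disjuncts of the defining formula of H: bodies (switches, atoms) of the
   clauses with head H whose atoms are all provable *)
Definition disj (T N : finType) (rules : seq (rule T N)) (s : N) (l : seq T)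
    (H : atom T N) : set (seq (rule T N) * seq (atom T N)) :=
  [set b | clause rules s l H b.1 b.2 /\
           forall C, C \in b.2 -> provable rules s l C].

Inductive defined (T N : finType) (rules : seq (rule T N)) (s : N) (l : seq T)
  : atom T N -> Prop :=
| def_top : defined rules s l (inl l)
| def_step H b C : defined rules s l H -> disj rules s l H b -> C \in b.2 ->
    defined rules s l C.

Definition parent (T N : finType) (rules : seq (rule T N)) (s : N) (l : seq T)
    (H C : atom T N) : Prop :=
  defined rules s l H /\ exists b, disj rules s l H b /\ C \in b.2.

Definition ancestor (T N : finType) (rules : seq (rule T N)) (s : N)
    (l : seq T) : atom T N -> atom T N -> Prop :=
  clos_trans _ (parent rules s l).

Definition same_scc (T N : finType) (rules : seq (rule T N)) (s : N)
    (l : seq T) (H C : atom T N) : Prop :=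
  H = C \/ (ancestor rules s l H C /\ ancestor rules s l C H).

(* Probability equations Eq(G_l).  An assignment X gives a real P(H) = X H to
   each atom (only the values at defined goals matter).                     *)
Definition disj_value (R : realType) (T N : finType) (theta : rule T N -> R)
    (X : atom T N -> R) (b : seq (rule T N) * seq (atom T N)) : R :=
  (\prod_(C <- b.2) X C) * (\prod_(r <- b.1) theta r).

Definition eq_rhs (R : realType) (T N : finType) (rules : seq (rule T N))
    (theta : rule T N -> R) (s : N) (l : seq T) (X : atom T N -> R)
    (H : atom T N) : R :=
  \sum_(b \in disj rules s l H) disj_value theta X b.

Definition is_solution (R : realType) (T N : finType) (rules : seq (rule T N))
    (theta : rule T N -> R) (s : N) (l : seq T) (X : atom T N -> R) : Prop :=
  forall H, defined rules s l H -> X H = eq_rhs rules theta s l X H.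

Definition nonneg_on_goals (R : realType) (T N : finType)
    (rules : seq (rule T N)) (s : N) (l : seq T) (X : atom T N -> R) : Prop :=
  forall H, defined rules s l H -> 0 <= X H.

Definition least_nonneg_solution (R : realType) (T N : finType)
    (rules : seq (rule T N)) (theta : rule T N -> R) (s : N) (l : seq T)
    (X : atom T N -> R) : Prop :=
  is_solution rules theta s l X /\ nonneg_on_goals rules s l X /\
  forall Z, is_solution rules theta s l Z -> nonneg_on_goals rules s l Z ->
    forall H, defined rules s l H -> X H <= Z H.

Definition is_scc_enum (T N : finType) (rules : seq (rule T N)) (s : N)
    (l : seq T) (K : nat) (A : 'I_K -> atom T N) : Prop :=
  injective A /\
  exists A0, defined rules s l A0 /\
    forall H, (defined rules s l H /\ same_scc rules s l H A0) <->
              exists j, A j = H.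

(* The matrix M and vector Y of the block X_A = M X_A + Y_A, where the goals
   outside S are given their values in Xinf. *)
Definition scc_M (R : realType) (T N : finType) (rules : seq (rule T N))
    (theta : rule T N -> R) (s : N) (l : seq T) (Xinf : atom T N -> R)
    (K : nat) (A : 'I_K -> atom T N) : 'M[R]_K :=
  \matrix_(j, k)
    \sum_(b \in [set b | disj rules s l (A j) b /\ A k \in b.2])
       ((\prod_(C <- b.2 | C != A k) Xinf C) * (\prod_(r <- b.1) theta r)).

Definition scc_Y (R : realType) (T N : finType) (rules : seq (rule T N))
    (theta : rule T N -> R) (s : N) (l : seq T) (Xinf : atom T N -> R)
    (K : nat) (A : 'I_K -> atom T N) : 'cV[R]_K :=
  \col_j
    \sum_(b \in [set b | disj rules s l (A j) b /\ forall k, A k \notin b.2])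
       disj_value theta Xinf b.

(* Reading input never increases along the explanation graph, so all goals of
   an SCC read input of the same length.  In a clause
   [p(A beta, u, w) <- m(A -> alpha) /\ p(alpha, u, v) /\ p(beta, v, w)] the
   absence of epsilon-rules makes [p(beta, v, w)] read strictly less than the
   head, so every disjunct contains at most one goal of the SCC and the block
   equations [X_A = M X_A + Y_A] are linear; they hold at [Xinf].
   Every provable goal is positive at [Xinf], [M] is nonnegative and
   irreducible since the SCC is strongly connected, and [Y_A <> 0] because the
   proof tree of a goal of the SCC must leave it.  A Perron-Frobenius argument
   then gives [ker (1 - M) = 0]: if [z = M z] and [c] is the maximum of
   [|z_i| / x_i] with [x = X_A], then [c x - |z|] is a nonnegative subinvariant
   vector vanishing somewhere, hence everywhere by irreducibility, which
   forces [c Y_A = 0], i.e. [c = 0]. *)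

From HB Require Import structures.
From mathcomp Require Import all_boot all_order all_algebra.
From mathcomp Require Import boolp classical_sets functions cardinality fsbigop.
From mathcomp Require Import reals constructive_ereal ereal esum.
From mathcomp Require Import ring lra.
From Stdlib Require Import Relations.Relation_Operators Relations.Operators_Properties.

Set Implicit Arguments.
Unset Strict Implicit.
Unset Printing Implicit Defensive.
Import Order.TTheory GRing.Theory Num.Theory.
Local Open Scope ring_scope.
Local Open Scope classical_set_scope.

Section NonnegativeMatrices.
Variables (R : realFieldType) (K : nat) (M : 'M[R]_K).

Definition mx_nonneg := forall i j, 0 <= M i j.

Definition mx_irreducible := forall Z : pred 'I_K,
  (exists i, Z i) -> (forall i j, Z i -> 0 < M i j -> Z j) -> forall i, Z i.

Hypothesis M_ge0 : mx_nonneg.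

Lemma subinvariant_zero_propagates (w y : 'I_K -> R) k :
  (forall i, 0 <= w i) -> (forall i, 0 <= y i) ->
  (forall i, \sum_j M i j * w j + y i <= w i) -> w k = 0 ->
  y k = 0 /\ forall j, 0 < M k j -> w j = 0.
Proof.
move=> w_ge0 y_ge0 wsub wk0.
have Mw_ge0 : forall j, 0 <= M k j * w j by move=> j; rewrite mulr_ge0.
have sum_ge0 : 0 <= \sum_j M k j * w j by apply: sumr_ge0.
have le0 := wsub k; rewrite wk0 in le0.
have yk_ge0 := y_ge0 k.
have sum0 : \sum_j M k j * w j = 0 by apply/eqP; rewrite eq_le sum_ge0 andbT; lra.
split; first by apply/eqP; rewrite eq_le y_ge0 andbT; lra.
move=> j Mkj; have : M k j * w j = 0.
  apply/eqP; rewrite eq_le Mw_ge0 andbT -sum0 (bigD1 j) //= lerDl.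
  exact: sumr_ge0.
by move/eqP; rewrite mulf_eq0 gt_eqF // => /eqP.
Qed.

Hypothesis M_irr : mx_irreducible.

Lemma irreducible_subinvariant_fixpoint_eq0 (x y z : 'I_K -> R) :
  (forall i, 0 < x i) -> (forall i, 0 <= y i) -> (exists j, 0 < y j) ->
  (forall i, \sum_j M i j * x j + y i <= x i) ->
  (forall i, z i = \sum_j M i j * z j) -> forall i, z i = 0.
Proof.
move=> x_gt0 y_ge0 [j0 yj0] xsub zfix i.
have [i1 _ i1_max] := @arg_maxP _ _ _ i xpredT (fun k => `|z k| / x k) isT.
set c := `|z i1| / x i1.
have c_ge0 : 0 <= c by rewrite divr_ge0 // ltW.
pose w k := c * x k - `|z k|.
have w_ge0 k : 0 <= w k by rewrite subr_ge0 -ler_pdivrMr //; apply: i1_max.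
have wsub k : \sum_j M k j * w j + c * y k <= w k.
  have Mz : `|z k| <= \sum_j M k j * `|z j|.
    rewrite {1}zfix; apply: (le_trans (ler_norm_sum _ _ _)).
    by apply: ler_sum => j _; rewrite normrM ger0_norm.
  have Mw : \sum_j M k j * w j = c * \sum_j M k j * x j - \sum_j M k j * `|z j|.
    by rewrite mulr_sumr -sumrB; apply: eq_bigr => j _; rewrite /w; ring.
  have := ler_wpM2l c_ge0 (xsub k); rewrite mulrDr => cx.
  rewrite Mw /w; lra.
have cy_ge0 k : 0 <= c * y k by rewrite mulr_ge0.
have w0 : forall k, w k == 0.
  apply: (M_irr (Z := fun k => w k == 0)).
    by exists i1; rewrite /w /c divfK ?subrr // gt_eqF.
  move=> k j /eqP wk0 Mkj; apply/eqP.
  exact: (subinvariant_zero_propagates w_ge0 cy_ge0 wsub wk0).2.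
have c0 : c = 0.
  have [cy0 _] := subinvariant_zero_propagates w_ge0 cy_ge0 wsub (eqP (w0 j0)).
  by move/eqP: cy0; rewrite mulf_eq0 (gt_eqF yj0) orbF => /eqP.
by apply/normr0_eq0/eqP; have := w0 i; rewrite /w c0 mul0r sub0r oppr_eq0.
Qed.

End NonnegativeMatrices.

Lemma unitmx_of_ker0 (F : fieldType) K (B : 'M[F]_K) :
  (forall z : 'cV[F]_K, B *m z = 0 -> z = 0) -> B \in unitmx.
Proof.
move=> ker0; rewrite -unitmx_tr unitmxE unitfE; apply/negP => /det0P[v v_neq0 vB].
have Bv : B *m v^T = 0 by rewrite -(trmxK B) -trmx_mul vB trmx0.
by move/eqP: v_neq0; apply; rewrite -(trmxK v) (ker0 _ Bv) trmx0.
Qed.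

Lemma eq_fixpoint_invmx (F : fieldType) K (M : 'M[F]_K) (y : 'cV[F]_K) :
  (1%:M - M) \in unitmx -> forall x, x = M *m x + y <-> x = invmx (1%:M - M) *m y.
Proof.
move=> U x; split=> Ex.
  have <- : (1%:M - M) *m x = y by rewrite mulmxBl mul1mx {1}Ex addrAC subrr add0r.
  by rewrite mulKmx.
have : (1%:M - M) *m x = y by rewrite Ex mulKVmx.
by rewrite mulmxBl mul1mx => /eqP; rewrite subr_eq addrC => /eqP.
Qed.

Lemma irreducible_subinvariant_unitmx (R : realFieldType) K (M : 'M[R]_K)
    (x y : 'I_K -> R) :
  mx_nonneg M -> mx_irreducible M ->
  (forall i, 0 < x i) -> (forall i, 0 <= y i) -> (exists j, 0 < y j) ->
  (forall i, \sum_j M i j * x j + y i <= x i) -> (1%:M - M) \in unitmx.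
Proof.
move=> M_ge0 M_irr x_gt0 y_ge0 y_pos xsub; apply: unitmx_of_ker0 => z.
rewrite mulmxBl mul1mx => /eqP; rewrite subr_eq0 => /eqP zfix.
apply/matrixP => i j; rewrite ord1 mxE.
apply: (irreducible_subinvariant_fixpoint_eq0 (z := fun k => z k 0) M_ge0 M_irr
  x_gt0 y_ge0 y_pos xsub) => k.
by rewrite {1}zfix mxE.
Qed.

Lemma fsum_seq_mkcond (R : numDomainType) (I : choiceType) (r : seq I)
    (P : set I) (F : I -> R) :
  uniq r -> P `<=` [set` r] ->
  \sum_(i \in P) F i = \sum_(i <- r) (if i \in P then F i else 0).
Proof.
move=> r_uniq Pr.
rewrite (eq_fsbigr (fun i => if i \in P then F i else 0)); last by move=> i ->.
apply: fsbig_fwiden => // i [_ nPi]; rewrite /preimage /= ifF //.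
by apply/negbTE/negP => /set_mem.
Qed.

Lemma fsumr_ge_term (R : numDomainType) (I : choiceType) (P : set I)
    (F : I -> R) i :
  finite_set P -> (forall j, P j -> 0 <= F j) -> P i -> F i <= \sum_(j \in P) F j.
Proof.
move=> P_fin F_ge0 Pi; rewrite (fsbigD1 i) //= lerDl.
by apply: fsumr_ge0 => j [Pj _]; apply: F_ge0.
Qed.

Section ExplanationGraph.
Variables (T N : finType) (rules : seq (rule T N)) (s : N) (l : seq T).
Hypothesis no_eps : no_eps_rule rules.

Lemma provable_patom_suffix b u v : provable rules s l (patom b u v) ->
  (exists n, v = drop n u) /\ (b != [::] -> (size v < size u)%N).
Proof.
move e: (patom b u v) => H pH; elim: pH b u v e => H' ms ps c _ IH b0 u0 v0.
case: c IH => [|u|a b|a b v w v_neq0|A b alpha u Ar|A b alpha u v w Ar v_neq0] IH //;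
  rewrite /patom => -[-> -> ->].
- by split => //; exists 0%N; rewrite drop0.
- by split => //; exists 1%N.
- have [[n ->] _] := IH _ (mem_head _ _) _ _ _ erefl.
  split; first by exists n.+1.
  by move=> _; rewrite /= size_drop ltnS leq_subr.
- have [_ alpha_shrinks] := IH _ (mem_head _ _) _ _ _ erefl.
  split; first by exists (size u); rewrite drop_size.
  by move=> _; apply: alpha_shrinks (no_eps Ar).
- have [[m ->] _] := IH (patom b v w) (mem_last (patom alpha u v) [:: _]) _ _ _ erefl.
  have [[n ->] alpha_shrinks] := IH _ (mem_head _ _) _ _ _ erefl.
  split; first by exists (m + n)%N; rewrite drop_drop.
  move=> _; apply: leq_ltn_trans (alpha_shrinks (no_eps Ar)).
  by rewrite size_drop leq_subr.
Qed.

Definition input_size (H : atom T N) : nat :=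
  match H with inl l' => size l' | inr t => size t.1.2 end.

Lemma clause_body_patom H ms ps C :
  clause rules s l H ms ps -> C \in ps -> exists t, C = inr t.
Proof.
case=> [|u|a b|a b v w _|A b alpha u _|A b alpha u v w _ _]; rewrite ?inE //;
  by [move/eqP->; eexists | case/orP=> /eqP->; eexists].
Qed.

Lemma clause_body_input_size H ms ps C : clause rules s l H ms ps ->
  (forall C, C \in ps -> provable rules s l C) -> C \in ps ->
  (input_size C <= input_size H)%N.
Proof.
case=> [|u|a b|a b v w _|A b alpha u _|A b alpha u v w _ _] ps_prov;
  rewrite ?inE //.
- by move/eqP->.
- by move/eqP->; apply: leqnSn.
- by move/eqP->.
- case/orP=> /eqP-> //=.
  have [[n ->] _] := provable_patom_suffix (ps_prov _ (mem_head _ _)).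
  by rewrite size_drop leq_subr.
Qed.

Lemma clause_switch_rule H ms ps r :
  clause rules s l H ms ps -> r \in ms -> r \in rules.
Proof.
by case=> [|u|a b|a b v w _|A b alpha u Ar|A b alpha u v w Ar _];
  rewrite ?inE // => /eqP->.
Qed.

Lemma disj_body_shape H b : disj rules s l H b ->
  b.2 = [::] \/ (exists C, b.2 = [:: C]) \/
  (exists C1 C2, b.2 = [:: C1; C2] /\ (input_size C2 < input_size H)%N).
Proof.
case: b => ms ps [/= c ps_prov].
case: c ps_prov => [|u|a b|a b v w _|A b alpha u _|A b alpha u v w Ar _] ps_prov;
  try by [left | right; left; eexists].
right; right; do 2 eexists; split=> //=.
have [[n ->] alpha_shrinks] := provable_patom_suffix (ps_prov _ (mem_head _ _)).
exact: alpha_shrinks (no_eps Ar).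
Qed.

Definition suffixes (u : seq T) := [seq drop n u | n <- iota 0 (size u).+1].

(* Contains every disjunct of [H]: the split point [v] of a body
   [p(alpha, u, v) /\ p(beta, v, w)] is a suffix of [u]. *)
Definition candidate_bodies (H : atom T N) : seq (seq (rule T N) * seq (atom T N)) :=
  match H with
  | inl l' => [:: ([::], [:: patom [:: inr s] l' [::]])]
  | inr (b, u, w) =>
    [:: ([::], [::]); ([::], [:: patom (behead b) (behead u) w])] ++
    [seq ([:: r], [:: patom r.2 u [::]]) | r <- rules] ++
    [seq ([:: r], [:: patom r.2 u v; patom (behead b) v w])
      | r <- rules, v <- suffixes u]
  end.

Lemma candidate_bodies_patom b u w : candidate_bodies (patom b u w) =
  [:: ([::], [::]); ([::], [:: patom (behead b) (behead u) w])] ++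
  [seq ([:: r], [:: patom r.2 u [::]]) | r <- rules] ++
  [seq ([:: r], [:: patom r.2 u v; patom (behead b) v w])
    | r <- rules, v <- suffixes u].
Proof. by []. Qed.

Lemma clause_candidate H ms ps : clause rules s l H ms ps ->
  (forall C, C \in ps -> provable rules s l C) -> (ms, ps) \in candidate_bodies H.
Proof.
case=> [|u|a b|a b v w _|A b alpha u Ar|A b alpha u v w Ar v_neq0] ps_prov;
  rewrite ?candidate_bodies_patom ?mem_cat ?inE ?eqxx ?orbT //.
  by rewrite map_f ?orbT.
apply/orP; right; apply/orP; right.
have [[n v_drop] _] := provable_patom_suffix (ps_prov _ (mem_head _ _)).
apply/allpairsP; exists ((A, alpha), v); split=> //.
have n_le : (n <= size u)%N.
  by rewrite leqNgt; apply: contra v_neq0 => /ltnW ?; rewrite v_drop drop_oversize.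
by rewrite v_drop; apply/mapP; exists n; rewrite // mem_iota add0n ltnS.
Qed.

Lemma finite_disj H : finite_set (disj rules s l H).
Proof.
apply: (sub_finite_set _ (finite_seq (candidate_bodies H))) => -[ms ps] [c ps_prov].
exact: clause_candidate c ps_prov.
Qed.

Local Notation descends := (clos_refl_trans _ (parent rules s l)).

Lemma parent_input_size H C :
  parent rules s l H C -> (input_size C <= input_size H)%N.
Proof.
by move=> [_ [b [[c ps_prov] Cb]]]; apply: clause_body_input_size c ps_prov Cb.
Qed.

Lemma descends_input_size H C : descends H C -> (input_size C <= input_size H)%N.
Proof.
elim=> [x y /parent_input_size //|x //|x y z _ IH1 _ IH2].
exact: leq_trans IH2 IH1.
Qed.

Lemma descends_to_q H l' : descends H (inl l') -> H = inl l'.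
Proof.
move e: (inl l') => q dq.
elim: dq e => [x y [_ [b [[c _] yb]]] yq|x //|x y z _ IH1 _ IH2].
  by have [t yt] := clause_body_patom c yb; rewrite -yq in yt.
by move=> e; have yz := IH2 e; rewrite IH1 // yz.
Qed.

Lemma descends_ancestor H C : descends H C -> H = C \/ ancestor rules s l H C.
Proof.
elim=> [x y p|x|x y z _ [<-|IH1] _ [<-|IH2]]; try by [left | right].
- by right; apply: t_step.
- by right; apply: t_trans IH1 IH2.
Qed.

Lemma same_scc_descends H C :
  same_scc rules s l H C -> descends H C /\ descends C H.
Proof.
by case=> [->|[HC CH]]; split; [apply: rt_refl | apply: rt_refl |
  apply: clos_t_clos_rt HC | apply: clos_t_clos_rt CH].
Qed.

Lemma defined_provable H : defined rules s l H -> H = inl l \/ provable rules s l H.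
Proof. by case=> [|H' b C _ db Cb]; [left | right; apply: db.2]. Qed.

End ExplanationGraph.

Section PositiveSolution.
Variables (R : realType) (T N : finType) (rules : seq (rule T N)).
Variables (theta : rule T N -> R) (s : N) (l : seq T) (X : atom T N -> R).
Hypothesis no_eps : no_eps_rule rules.
Hypothesis theta_gt0 : forall r, r \in rules -> 0 < theta r.
Hypothesis X_sol : is_solution rules theta s l X.
Hypothesis X_ge0 : nonneg_on_goals rules s l X.

Lemma disj_value_ge0 H b :
  defined rules s l H -> disj rules s l H b -> 0 <= disj_value theta X b.
Proof.
move=> dH db; rewrite /disj_value mulr_ge0 // big_seq prodr_ge0 // => [C Cb|r rb].
  exact/X_ge0/(def_step dH db Cb).
by apply/ltW/theta_gt0; apply: clause_switch_rule db.1 rb.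
Qed.

Lemma disj_value_gt0_of b : (forall C, C \in b.2 -> 0 < X C) ->
  (forall r, r \in b.1 -> r \in rules) -> 0 < disj_value theta X b.
Proof.
move=> X_gt0 b_rules; rewrite /disj_value mulr_gt0 // big_seq prodr_gt0 //.
by move=> r /b_rules; apply: theta_gt0.
Qed.

Lemma solution_gt0 H : provable rules s l H -> defined rules s l H -> 0 < X H.
Proof.
elim=> {}H ms ps c ps_prov IH dH.
have db : disj rules s l H (ms, ps) by split.
rewrite (X_sol dH) /eq_rhs; apply: lt_le_trans (fsumr_ge_term _ _ db).
- apply: disj_value_gt0_of => [C Cps|r]; last exact: clause_switch_rule c.
  exact: IH Cps (def_step dH db Cps).
- exact: finite_disj.
- by move=> b; apply: disj_value_ge0.
Qed.

Lemma disj_value_gt0 H b :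
  defined rules s l H -> disj rules s l H b -> 0 < disj_value theta X b.
Proof.
move=> dH db; apply: disj_value_gt0_of => [C Cb|r].
  exact: solution_gt0 (db.2 C Cb) (def_step dH db Cb).
exact: clause_switch_rule db.1.
Qed.

Section StronglyConnectedComponent.
Variables (K : nat) (A : 'I_K -> atom T N).
Hypothesis A_scc : is_scc_enum rules s l A.

Local Notation descends := (clos_refl_trans _ (parent rules s l)).
Local Notation M := (scc_M rules theta s l X A).
Local Notation Y := (scc_Y rules theta s l X A).

Let A0 := projT1 (cid A_scc.2).

Let A0P : defined rules s l A0 /\
  forall H, (defined rules s l H /\ same_scc rules s l H A0) <-> exists j, A j = H.
Proof. exact: projT2 (cid A_scc.2). Qed.

Lemma scc_enum_mem j :
  defined rules s l (A j) /\ descends (A j) A0 /\ descends A0 (A j).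
Proof.
have [dj sj] : defined rules s l (A j) /\ same_scc rules s l (A j) A0.
  by apply/(A0P.2 (A j)); exists j.
by split; last exact: same_scc_descends sj.
Qed.

Lemma mem_scc_enum H : defined rules s l H -> descends H A0 -> descends A0 H ->
  exists j, A j = H.
Proof.
move=> dH HA0 A0H; apply/(A0P.2 H); split=> //.
case: (descends_ancestor HA0) => [->|anc1]; first by left.
case: (descends_ancestor A0H) => [->|anc2]; first by left.
by right.
Qed.

Lemma scc_descends j k : descends (A j) (A k).
Proof. exact: rt_trans (scc_enum_mem j).2.1 (scc_enum_mem k).2.2. Qed.

Lemma scc_input_size j k : input_size (A j) = input_size (A k).
Proof.
by apply/eqP; rewrite eqn_leq !(descends_input_size no_eps (scc_descends _ _)).
Qed.

Lemma scc_disj_shape j b : disj rules s l (A j) b ->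
  b.2 = [::] \/ (exists C, b.2 = [:: C]) \/
  (exists C1 C2, b.2 = [:: C1; C2] /\ forall k, A k <> C2).
Proof.
move=> db; case: (disj_body_shape no_eps db) => [|[|[C1 [C2 [b2 C2_lt]]]]];
  try by [left | right; left].
right; right; exists C1, C2; split=> // k Ak.
by move: C2_lt; rewrite -Ak (scc_input_size j k) ltnn.
Qed.

Lemma scc_M_eq0_of_q j : A j = inl l -> M = 0.
Proof.
move=> Ajq; apply/matrixP => a k; rewrite !mxE; apply: fsbig1 => b [db Akb].
have Akq : A k = inl l by apply: descends_to_q; rewrite -Ajq; apply: scc_descends.
by have [t] := clause_body_patom db.1 Akb; rewrite Akq.
Qed.

Definition scc_term k (b : seq (rule T N) * seq (atom T N)) : R :=
  (\prod_(C <- b.2 | C != A k) X C) * (\prod_(r <- b.1) theta r).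

Lemma scc_term_gt0 j k b : disj rules s l (A j) b -> 0 < scc_term k b.
Proof.
move=> db; have dj := (scc_enum_mem j).1; rewrite /scc_term mulr_gt0 //.
  rewrite big_seq_cond prodr_gt0 // => C /andP[Cb _].
  exact: solution_gt0 (db.2 C Cb) (def_step dj db Cb).
by rewrite big_seq prodr_gt0 // => r rb; apply/theta_gt0/(clause_switch_rule db.1 rb).
Qed.

Lemma scc_M_nonneg : mx_nonneg M.
Proof.
by move=> j k; rewrite mxE; apply: fsumr_ge0 => b [db _]; apply/ltW/scc_term_gt0/db.
Qed.

Lemma scc_Y_ge0 j : 0 <= Y j 0.
Proof.
rewrite mxE; apply: fsumr_ge0 => b [db _].
exact: disj_value_ge0 (scc_enum_mem j).1 db.
Qed.

Lemma scc_M_gt0 j k b : disj rules s l (A j) b -> A k \in b.2 -> 0 < M j k.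
Proof.
move=> db Akb; rewrite mxE.
apply: lt_le_trans (scc_term_gt0 k db) (fsumr_ge_term _ _ _) => //.
- by apply: (sub_finite_set _ (finite_disj s l no_eps (A j))) => b' [].
- by move=> b' [db' _]; apply/ltW/scc_term_gt0/db'.
Qed.

Lemma scc_body_unique j k b : disj rules s l (A j) b -> A k \in b.2 ->
  (forall k', A k' \in b.2 -> k' = k) /\ scc_term k b * X (A k) = disj_value theta X b.
Proof.
move=> db; rewrite /scc_term /disj_value.
case: (scc_disj_shape db) => [->|[[C ->]|[C1 [C2 [-> C2_out]]]]] //.
- rewrite inE => /eqP Ak; split.
    by move=> k'; rewrite inE => /eqP Ak'; apply: A_scc.1; rewrite Ak' Ak.
  by rewrite !big_cons !big_nil -Ak eqxx /=; ring.
- rewrite !inE => /orP[] /eqP Ak; last by case: (C2_out k).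
  split.
    move=> k'; rewrite !inE => /orP[] /eqP Ak'; last by case: (C2_out k').
    by apply: A_scc.1; rewrite Ak' Ak.
  have C21 : C2 != C1 by apply/eqP => C21; apply: (C2_out k); rewrite Ak C21.
  by rewrite !big_cons !big_nil -Ak eqxx Ak C21 /=; ring.
Qed.

Lemma scc_disj_split j b :
  \sum_k (if b \in [set b | disj rules s l (A j) b /\ A k \in b.2]
          then scc_term k b * X (A k) else 0) +
  (if b \in [set b | disj rules s l (A j) b /\ forall k, A k \notin b.2]
   then disj_value theta X b else 0) =
  (if b \in disj rules s l (A j) then disj_value theta X b else 0).
Proof.
case: (boolP (b \in disj rules s l (A j))) => [/set_mem db|bD]; last first.
  have notin_bD P : P `<=` disj rules s l (A j) -> (b \in P) = false.
    by move=> PD; apply/negbTE; apply: contra bD => /set_mem/PD/mem_set.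
  rewrite notin_bD ?addr0 => [|? []//].
  by rewrite big1 // => k _; rewrite notin_bD // => ? [].
case: (boolP [exists k, A k \in b.2]) => [/existsP[k0 Ak0b]|/existsPn noA].
  have [only_k0 term_k0] := scc_body_unique db Ak0b.
  have in_k0 : b \in [set b | disj rules s l (A j) b /\ A k0 \in b.2].
    exact: mem_set.
  have notin_k k : k != k0 ->
      (b \in [set b | disj rules s l (A j) b /\ A k \in b.2]) = false.
    move=> k_neq0; apply/negbTE/negP => /set_mem[_ /only_k0 k_eq].
    by rewrite k_eq eqxx in k_neq0.
  have notin_Y :
      (b \in [set b | disj rules s l (A j) b /\ forall k, A k \notin b.2]) = false.
    by apply/negbTE/negP => /set_mem[_ /(_ k0)]; rewrite Ak0b.
  by rewrite (bigD1 k0) //= in_k0 notin_Y term_k0 big1 ?addr0 // => k /notin_k ->.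
have in_Y : b \in [set b | disj rules s l (A j) b /\ forall k, A k \notin b.2].
  exact: mem_set.
rewrite in_Y big1 ?add0r // => k _; rewrite ifF //.
by apply/negbTE/negP => /set_mem[_]; apply/negP/noA.
Qed.

Lemma scc_equation j : \sum_k M j k * X (A k) + Y j 0 = X (A j).
Proof.
have dj := (scc_enum_mem j).1.
set r := undup (candidate_bodies rules s (A j)).
have expand (P : set (seq (rule T N) * seq (atom T N))) (F : _ -> R) :
    P `<=` disj rules s l (A j) ->
    \sum_(b \in P) F b = \sum_(b <- r) (if b \in P then F b else 0).
  move=> PD; apply: fsum_seq_mkcond; first exact: undup_uniq.
  move=> [ms ps] /PD[c ps_prov]; rewrite /= mem_undup.
  exact: clause_candidate c ps_prov.
rewrite [RHS](X_sol dj) /eq_rhs mxE !expand // => [|? []//].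
under eq_bigr => k _.
  rewrite mxE expand => [|? []//]; rewrite mulr_suml.
  under eq_bigr => b _ do rewrite (fun_if (fun x => x * X (A k))) mul0r.
  over.
rewrite exchange_big /= -big_split /=.
by apply: eq_bigr => b _; apply: scc_disj_split.
Qed.

Lemma scc_Y_pos j : provable rules s l (A j) -> exists j', 0 < Y j' 0.
Proof.
move e: (A j) => H pH; elim: pH j e => {}H ms ps c ps_prov IH j Aj.
case: (boolP [exists k, A k \in ps]) => [/existsP[k Akps]|/existsPn noA].
  exact: IH Akps k erefl.
exists j; have db : disj rules s l (A j) (ms, ps) by rewrite Aj.
rewrite mxE.
apply: lt_le_trans (disj_value_gt0 (scc_enum_mem j).1 db) (fsumr_ge_term _ _ _).
- by apply: (sub_finite_set _ (finite_disj s l no_eps (A j))) => b' [].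
- by move=> b' [db' _]; apply: disj_value_ge0 (scc_enum_mem j).1 db'.
- by split=> // k; apply: noA.
Qed.

Lemma scc_M_irreducible : mx_irreducible M.
Proof.
move=> Z [i0 Zi0] Z_closed k.
have reach_Z C : descends (A i0) C -> descends C A0 -> forall k, A k = C -> Z k.
  elim/clos_refl_trans_ind_left => {C} [_ k' /A_scc.1 -> //|].
  move=> C C' i0C IH CC' C'A0 k' Ak'.
  have CA0 : descends C A0 by apply: rt_trans (rt_step _ _ _ _ CC') C'A0.
  have A0C : descends A0 C by apply: rt_trans (scc_enum_mem i0).2.2 i0C.
  have [dC [b [db C'b]]] := CC'.
  have [k1 Ak1] := mem_scc_enum dC CA0 A0C.
  apply: (Z_closed k1); first exact: IH CA0 k1 Ak1.
  by apply: (scc_M_gt0 (b := b)); rewrite ?Ak1 ?Ak'.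
exact: reach_Z (scc_descends i0 k) (scc_enum_mem k).2.1 k erefl.
Qed.

Lemma scc_enum_gt0 : (0 < K)%N.
Proof.
have [j _] : exists j, A j = A0 by apply/A0P.2; split; [exact: A0P.1 | left].
exact: leq_ltn_trans (leq0n j) (ltn_ord j).
Qed.

(* [q(l)] occurs in no clause body, so its SCC is [{q(l)}] and [M = 0]; any
   other defined goal is provable, hence positive at [X]. *)
Lemma scc_unitmx : (1%:M - M) \in unitmx.
Proof.
have [[j Ajq]|no_q] := pselect (exists j, A j = inl l).
  by rewrite (scc_M_eq0_of_q Ajq) subr0 unitmx1.
have A_prov k : provable rules s l (A k).
  by case: (defined_provable (scc_enum_mem k).1) => // Akq; case: no_q; exists k.
apply: (irreducible_subinvariant_unitmx (x := fun k => X (A k)) (y := fun k => Y k 0)).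
- exact: scc_M_nonneg.
- exact: scc_M_irreducible.
- by move=> k; apply: solution_gt0 (A_prov k) (scc_enum_mem k).1.
- exact: scc_Y_ge0.
- exact: scc_Y_pos (A_prov (Ordinal scc_enum_gt0)).
- by move=> k; rewrite scc_equation.
Qed.

End StronglyConnectedComponent.
End PositiveSolution.

Theorem theorem4 (R : realType) (T N : finType) (rules : seq (rule T N))
    (theta : rule T N -> R) (s : N)
    (Hnoeps : no_eps_rule rules)
    (Hpcfg : is_PCFG rules theta)
    (Huseless : no_useless rules s)
    (Hcons : consistent rules theta s)
    (l : seq T) (Hl : is_prefix rules s l)
    (Xinf : atom T N -> R) (HXinf : least_nonneg_solution rules theta s l Xinf)
    (K : nat) (A : 'I_K -> atom T N) (HS : is_scc_enum rules s l A) :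
  let M := scc_M rules theta s l Xinf A in
  let Y := scc_Y rules theta s l Xinf A in
  (1%:M - M) \in unitmx /\
  forall x : 'cV[R]_K, x = M *m x + Y <-> x = invmx (1%:M - M) *m Y.
Proof.
move=> M Y; have [X_sol [X_ge0 _]] := HXinf.
have U : (1%:M - M) \in unitmx := scc_unitmx Hnoeps Hpcfg.2.1 X_sol X_ge0 HS.
by split=> //; apply: eq_fixpoint_invmx.
Qed.
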